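(* For $n\ge2$ agents with identical additive valuations, every online algorithm that in each round $t$ outputs a contiguous EF1 allocation of $M_t$ requires $\Omega(nT)$ adjustments in the worst case (for $T$ sufficiently large compared with $n$).
   Context: Items $g_1,\dots,g_T$ arrive online on a line; $M_t=\{g_1,\dots,g_t\}$. A contiguous allocation of $M_t$ assigns agent $i$ the $i$-th block from the left. EF1: for all $i,j$, $A_j=\emptyset$ or some $g\in A_j$ has $v(A_i)\ge v(A_j\setminus\{g\})$. The number of adjustments is $\sum_{t=1}^{T-1}|\{g\in M_t: g \text{ is assigned to different agents in } A^t \text{ and } A^{t+1}\}|$. *)

From HB Require Import structures.
From mathcomp Require Import all_boot all_order all_algebra.
Set Implicit Arguments. Unset Strict Implicit. Unset Printing Implicit Defensive.
Import Order.TTheory GRing.Theory Num.Theory.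
Local Open Scope ring_scope.

(* Items g_1..g_t are represented by positions 0..t-1 of a sequence [s] of
   their (common, additive, nonnegative) values.  An allocation of M_t is a
   map [A : nat -> nat] sending item position j < t to its agent in 0..n-1. *)

Section Defs.
Variable R : realFieldType.

Definition bundle_val (s : seq R) (A : nat -> nat) (i : nat) : R :=
  \sum_(j < size s | A j == i) s`_j.

(* contiguous allocation: agent i gets the i-th block from the left
   (blocks may be empty), i.e. the assignment is monotone in the position *)
Definition contiguous_alloc (n : nat) (s : seq R) (A : nat -> nat) : Prop :=
  (forall j, (j < size s)%N -> (A j < n)%N) /\
  (forall j1 j2, (j1 <= j2)%N -> (j2 < size s)%N -> (A j1 <= A j2)%N).

Definition EF1 (n : nat) (s : seq R) (A : nat -> nat) : Prop :=
  forall i k, (i < n)%N -> (k < n)%N ->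
    (forall j, (j < size s)%N -> A j <> k) \/
    (exists2 g, (g < size s)%N /\ A g = k &
       bundle_val s A k - s`_g <= bundle_val s A i).

(* A deterministic online algorithm: after round t it has seen the values of
   g_1..g_t (the prefix [s], of size t) and outputs an allocation of M_t.
   Being a function of the prefix only makes it online. *)
Definition online_alg := seq R -> nat -> nat.

Definition valid_contig_EF1_alg (n : nat) (alg : online_alg) : Prop :=
  forall s : seq R, all (fun x => 0 <= x) s ->
    contiguous_alloc n s (alg s) /\ EF1 n s (alg s).

Definition adjustments (alg : online_alg) (v : seq R) : nat :=
  \sum_(1 <= t < size v)
     count (fun j => alg (take t v) j != alg (take t.+1 v) j) (iota 0 t).

End Defs.

From mathcomp Require Import all_boot all_order all_algebra.
From mathcomp Require Import zify.
Import Order.TTheory GRing.Theory Num.Theory.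

Set Implicit Arguments.
Unset Strict Implicit.
Unset Printing Implicit Defensive.

(* Feed only items of value 1.  With q n items, a contiguous EF1 allocation
   must give every agent exactly q items, so agent k holds the block
   [k q, (k+1) q).  Going from q n to (q+1) n items, the k items
   k q, ..., k q + k - 1 move from agent k to an earlier agent, so
   'C(n, 2) items change hands within these n rounds, whatever the
   algorithm does in between.  Summing over the ~T/n phases with q >= n
   gives about T n / 2 adjustments. *)

Lemma count_iota_leq (p : pred nat) m1 m2 : m1 <= m2 ->
  count p (iota 0 m1) <= count p (iota 0 m2).
Proof. by move=> le_m12; rewrite -(subnKC le_m12) iotaD count_cat leq_addr. Qed.

Lemma count_iota_all (p : pred nat) a k :
  (forall j, a <= j < a + k -> p j) -> count p (iota a k) = k.
Proof.
move=> pP; apply/eqP; rewrite -[X in _ == X](size_iota a k) -all_count.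
by apply/allP => j; rewrite mem_iota => /pP.
Qed.

Lemma count_ltn_sum (T : Type) (A : T -> nat) (s : seq T) i :
  count (fun x => A x < i) s = \sum_(k < i) count (fun x => A x == k) s.
Proof.
elim: i => [|i IHi].
  by rewrite big_ord0 (@eq_count _ _ pred0) ?count_pred0 // => x; rewrite ltn0.
rewrite big_ord_recr /= -IHi -count_predUI.
rewrite (@eq_count _ (predI _ _) pred0) ?count_pred0 => [|x /=]; last by case: ltngtP.
by rewrite addn0; apply: eq_count => x /=; rewrite ltnS leq_eqVlt orbC.
Qed.

Lemma count_iota_initial (p : pred nat) N j :
  (forall j1 j2, j1 <= j2 -> j2 < N -> p j2 -> p j1) -> j < N ->
  p j = (j < count p (iota 0 N)).
Proof.
move=> p_down ltjN; case pj: (p j); apply/esym.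
  apply: (@leq_trans (count p (iota 0 j.+1))); last exact: count_iota_leq.
  rewrite count_iota_all // => j' /andP[_]; rewrite add0n ltnS => le_j'j.
  exact: p_down le_j'j ltjN pj.
apply/negbTE; rewrite -leqNgt -(subnKC (ltnW ltjN)) iotaD count_cat add0n.
rewrite (@eq_in_count _ _ pred0 (iota j (N - j))) ?count_pred0 => [|j' /[!mem_iota] /andP[le_jj']].
  by rewrite addn0 -[X in _ <= X](size_iota 0 j) count_size.
rewrite subnKC ?(ltnW ltjN) // => lt_j'N.
by apply/negbTE/negP => /(p_down j j' le_jj' lt_j'N); rewrite pj.
Qed.

Lemma ltn_sum_ord n (b c : nat -> nat) i : i < n -> b i < c i ->
  (forall k, k < n -> b k <= c k) -> \sum_(k < n) b k < \sum_(k < n) c k.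
Proof.
move=> ltin lt_bc le_bc; rewrite (bigD1 (Ordinal ltin)) //= [X in _ < X](bigD1 (Ordinal ltin)) //=.
by rewrite -addSn leq_add //; apply: leq_sum => k _; apply: le_bc.
Qed.

Lemma almost_balanced_const n q (c : nat -> nat) :
  \sum_(i < n) c i = q * n ->
  (forall i k, i < n -> k < n -> c k = 0 \/ c k <= c i + 1) ->
  forall i, i < n -> c i = q.
Proof.
move=> sum_c almost_bal.
have sum_q : \sum_(i < n) q = q * n by rewrite sum_nat_const card_ord mulnC.
have le_cq k : k < n -> c k <= q.
  move=> ltkn; rewrite leqNgt; apply/negP => lt_qc.
  suff : \sum_(i < n) q < \sum_(i < n) c i by rewrite sum_q sum_c ltnn.
  apply: (@ltn_sum_ord n (fun=> q) c k ltkn) => // i ltin.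
  case: (almost_bal i k ltin ltkn) => [ck0|le_ck]; first by rewrite ck0 in lt_qc.
  by rewrite -ltnS; apply: leq_trans lt_qc _; rewrite -addn1.
move=> i ltin; apply/eqP; rewrite eqn_leq le_cq //= leqNgt; apply/negP => lt_cq.
suff : \sum_(k < n) c k < \sum_(k < n) q by rewrite sum_q sum_c ltnn.
exact: ltn_sum_ord ltin lt_cq le_cq.
Qed.

Definition bundle_size (A : nat -> nat) (N k : nat) : nat :=
  count (fun j => A j == k) (iota 0 N).

Section UnitItems.
Variable R : realFieldType.
Local Open Scope ring_scope.

Lemma nseq1_ge0 T : all (fun x : R => 0 <= x) (nseq T 1).
Proof. by apply/allP => x /nseqP[-> _]; apply: ler01. Qed.

Lemma bundle_val_nseq1 N (A : nat -> nat) k :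
  bundle_val (nseq N (1 : R)) A k = (bundle_size A N k)%:R.
Proof.
rewrite /bundle_val /bundle_size size_nseq -sum1_count natr_sum.
rewrite [iota 0 N](_ : _ = index_iota 0 N) ?big_mkord; last by rewrite /index_iota subn0.
by apply: eq_bigr => j _; rewrite nth_nseq ltn_ord.
Qed.

Lemma EF1_nseq1_almost_balanced n N (A : nat -> nat) i k :
  EF1 n (nseq N (1 : R)) A -> (i < n)%N -> (k < n)%N ->
  bundle_size A N k = 0%N \/ (bundle_size A N k <= bundle_size A N i + 1)%N.
Proof.
move=> ef1 ltin ltkn.
have [k_empty | [g [ltgN _]]] := ef1 i k ltin ltkn; last first.
  rewrite size_nseq in ltgN.
  by rewrite !bundle_val_nseq1 nth_nseq ltgN lerBlDr natr1 ler_nat addn1; right.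
left; apply/eqP; rewrite -leqn0 leqNgt -has_count; apply/hasP => -[j].
by rewrite mem_iota add0n => /andP[_ ltjN] /eqP; apply: k_empty; rewrite size_nseq.
Qed.

Lemma contiguous_EF1_nseq1_blocks n q (A : nat -> nat) :
  contiguous_alloc n (nseq (q * n) (1 : R)) A -> EF1 n (nseq (q * n) (1 : R)) A ->
  forall i j, (i <= n)%N -> (j < q * n)%N -> (A j < i)%N = (j < i * q)%N.
Proof.
rewrite /contiguous_alloc size_nseq => -[A_lt A_mono] ef1 i j lein ltj.
have sum_sizes : (\sum_(k < n) bundle_size A (q * n) k = q * n)%N.
  by rewrite -count_ltn_sum count_iota_all // => j' /andP[_]; apply: A_lt.
have size_q := almost_balanced_const sum_sizes
  (fun i' k' ltin ltkn => EF1_nseq1_almost_balanced ef1 ltin ltkn).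
have count_lt : count (fun j => A j < i)%N (iota 0 (q * n)) = (i * q)%N.
  rewrite count_ltn_sum (eq_bigr (fun=> q)) ?sum_nat_const ?card_ord // => k _.
  exact/size_q/(leq_trans (ltn_ord k)).
rewrite -count_lt; apply: (count_iota_initial _ ltj) => j1 j2 le_j12 ltj2 /=.
exact/leq_ltn_trans/A_mono.
Qed.

End UnitItems.

Definition round_changes (f : nat -> nat -> nat) (t : nat) : nat :=
  count (fun j => f t j != f t.+1 j) (iota 0 t).

Lemma changes_le_sum_round_changes (f : nat -> nat -> nat) t1 m d : m <= t1 ->
  count (fun j => f t1 j != f (t1 + d) j) (iota 0 m) <=
  \sum_(t1 <= t < t1 + d) round_changes f t.
Proof.
move=> le_mt1; elim: d => [|d IHd].
  by rewrite addn0 big_geq // (@eq_count _ _ pred0) ?count_pred0 // => j /=; rewrite eqxx.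
rewrite addnS big_nat_recr ?leq_addr //=.
apply: leq_trans (leq_add IHd (count_iota_leq _ (leq_trans le_mt1 (leq_addr d t1)))).
rewrite -count_predUI; apply: leq_trans (leq_addr _ _); apply: sub_count => j /=.
by apply: contraR => /norP[/negPn/eqP -> /negPn/eqP ->].
Qed.

Section UnitInstance.
Variables (R : realFieldType) (n : nat) (alg : online_alg R).
Hypothesis alg_valid : valid_contig_EF1_alg n alg.

Lemma phase_changes q : n <= q ->
  'C(n, 2) <= count (fun j => alg (nseq (q * n) 1%R) j != alg (nseq (q.+1 * n) 1%R) j)
                    (iota 0 (q * n)).
Proof.
move=> le_nq.
have [contA ef1A] := alg_valid (nseq1_ge0 R (q * n)).
have [contB ef1B] := alg_valid (nseq1_ge0 R (q.+1 * n)).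
have blocksA := contiguous_EF1_nseq1_blocks contA ef1A.
have blocksB := contiguous_EF1_nseq1_blocks contB ef1B.
set moved := (fun j => _ != _).
suff : forall k, k <= n -> \sum_(0 <= i < k) i <= count moved (iota 0 (k * q)).
  by move=> /(_ n (leqnn n)); rewrite bin2_sum mulnC.
(* items k q, ..., k q + k - 1 leave agent k for an earlier agent *)
elim=> [|k IHk] ltkn; first by rewrite big_geq.
rewrite big_nat_recr //= mulSnr iotaD count_cat add0n leq_add ?IHk ?(ltnW ltkn) //.
rewrite -[X in iota _ X](subnKC (leq_trans (ltnW ltkn) le_nq)) iotaD count_cat.
rewrite count_iota_all ?leq_addr // => j /andP[le_kqj ltj].
have ltjA : j < q * n.
  by move: ltkn (leq_trans (ltnW ltkn) le_nq) le_kqj ltj; clear; nia.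
have ltjB : j < q.+1 * n by apply: leq_trans ltjA _; rewrite leq_mul2r leqnSn orbT.
have := blocksA _ _ (ltnW ltkn) ltjA; have := blocksB _ _ (ltnW ltkn) ltjB.
rewrite mulnS addnC ltj [j < _]ltnNge le_kqj /moved.
by move=> ltB ltA; apply/eqP => eqAB; rewrite eqAB ltB in ltA.
Qed.

Lemma adjustments_nseq1_ge d T : 0 < n -> (n + d) * n <= T ->
  d * 'C(n, 2) <= adjustments alg (nseq T 1%R).
Proof.
move=> n_gt0 le_T.
pose f t := alg (take t (nseq T 1%R)).
have phases e : (n + e) * n <= T ->
    e * 'C(n, 2) <= \sum_(n * n <= t < (n + e) * n) round_changes f t.
  elim: e => [|e IHe] le_eT; first by rewrite mul0n.
  have le_ne : (n + e) * n <= (n + e.+1) * n by rewrite leq_mul2r addnS leqnSn orbT.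
  rewrite (big_cat_nat _ le_ne) ?leq_mul2r ?leq_addr ?orbT //= mulSn addnC.
  rewrite leq_add ?IHe ?(leq_trans le_ne) // addnS mulSnr.
  apply: leq_trans (changes_le_sum_round_changes f _ (leqnn _)).
  rewrite addnS in le_eT le_ne.
  rewrite /f -mulSnr !take_nseq ?(leq_trans le_ne) //.
  exact: phase_changes (leq_addr _ _).
apply: leq_trans (phases d le_T) _; rewrite /adjustments size_nseq.
have le_nn : 1 <= n * n by rewrite muln_gt0 n_gt0.
have le_nnT : n * n <= T by apply: leq_trans le_T; rewrite leq_mul2r leq_addr orbT.
rewrite (big_cat_nat le_nn le_nnT) (big_cat_nat _ le_T) /=.
  by rewrite addnCA leq_addr.
by rewrite leq_mul2r leq_addr orbT.
Qed.
End UnitInstance.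

Lemma phase_count_bound n T : 2 <= n -> n * (2 * n + 1) <= T ->
  n * T <= 8 * ((T %/ n - n) * 'C(n, 2)).
Proof.
move=> le2n le_T; have n_gt0 : 0 < n by apply: leq_trans le2n.
have two_bin : 'C(n, 2) * 2 = n * (n - 1) by rewrite mulnC -mul_bin_diag bin1 subn1.
have lt_TQ : T < T %/ n * n + n by rewrite {1}(divn_eq T n) ltn_add2l ltn_pmod.
have le_Q : 2 * n + 1 <= T %/ n by rewrite leq_divRL // mulnC.
move: (T %/ n) ('C(n, 2)) lt_TQ le_Q two_bin => Q C lt_TQ le_Q two_bin.
have [e def_Q le_e] : exists2 e, Q = n + e & n + 1 <= e.
  by exists (Q - n); [rewrite subnKC | ]; lia.
rewrite def_Q addKn in lt_TQ *.
have le_phase : (n + e) * n + n <= 4 * e * (n - 1) by nia.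
apply: (@leq_trans (n * ((n + e) * n + n))); first by rewrite leq_mul2l (ltnW lt_TQ) orbT.
apply: (@leq_trans (n * (4 * e * (n - 1)))); first by rewrite leq_mul2l le_phase orbT.
by rewrite mulnCA -two_bin; clear; nia.
Qed.

Theorem mainTheorem10 :
  exists d : nat, (0 < d)%N /\
  forall (R : realFieldType) (n : nat), (2 <= n)%N ->
  exists T0 : nat, forall T : nat, (T0 <= T)%N ->
  forall alg : online_alg R, valid_contig_EF1_alg n alg ->
  exists v : seq R, [/\ size v = T, all (fun x => (0 <= x)%R) v &
     (n * T <= d * adjustments alg v)%N].
Proof.
exists 8; split=> // R n le2n; exists (n * (2 * n + 1)) => T le_T alg alg_valid.
exists (nseq T 1%R); split; [exact: size_nseq | exact: nseq1_ge0 |].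
have n_gt0 : 0 < n by apply: leq_trans le2n.
apply: (leq_trans (phase_count_bound le2n le_T)); rewrite leq_mul2l /=.
apply: adjustments_nseq1_ge => //.
rewrite subnKC ?leq_divM // leq_divRL // (leq_trans _ le_T) //.
by rewrite leq_pmul2l // mul2n -addnn -addnA leq_addr.
Qed.
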